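(* Let $n\ge1$, $q$ a prime power, and let $(\mathsf{Enc},\mathcal{A})$ be any $n$-party one-round aggregation protocol over $\mathbb{F}_q$ in the anonymized model with encoder $\mathsf{Enc}:\mathbb{F}_q\to[\ell]^m$. Then for each $s\in\mathbb{F}_q$ there exist $\mathbf{x},\mathbf{x}'\in\mathcal{B}_s$ such that $$\mathrm{SD}\left(\mathcal{S}^{\mathsf{Enc}}_{\mathbf{x}},\mathcal{S}^{\mathsf{Enc}}_{\mathbf{x}'}\right)\ge1-\frac{n^{nm}}{q^{n-1}}.$$
   Context: $\mathcal{B}_s=\{\mathbf{x}\in\mathbb{F}_q^n:\sum_ix_i=s\}$; $\mathrm{SD}$ is statistical distance. An $n$-party one-round aggregation protocol over $\mathbb{F}_q$ with $m$ messages per party consists of a randomized encoder $\mathsf{Enc}:\mathbb{F}_q\to[\ell]^m$ (for some positive integer $\ell$; each party applies it to its input with independent randomness) and an analyzer $\mathcal{A}:[\ell]^{nm}\to\mathbb{F}_q$ such that for every $\mathbf{x}\in\mathbb{F}_q^n$, every possible realization of the encodings $\mathsf{Enc}(x_1),\dots,\mathsf{Enc}(x_n)$, and every permutation $\pi$ of $[nm]$, the analyzer applied to the concatenation $(\mathsf{Enc}(x_1),\dots,\mathsf{Enc}(x_n))$ with coordinates permuted by $\pi$ outputs $\sum_i x_i$. $\mathcal{S}^{\mathsf{Enc}}_{\mathbf{x}}$ is the distribution on $[\ell]^{nm}$ of this concatenation after applying an independent uniformly random permutation of the $nm$ coordinates. *)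

From HB Require Import structures.
From mathcomp Require Import all_boot all_order all_algebra all_fingroup all_field.
Set Implicit Arguments. Unset Strict Implicit. Unset Printing Implicit Defensive.
Import Order.TTheory GRing.Theory Num.Theory.
Local Open Scope ring_scope.

(* A message is an element of [l] = 'I_l; an encoding of one party is an
   m-vector of messages; the full transcript is indexed by 'I_n * 'I_m
   (a set of size n*m; coordinate (i,j) = j-th message of party i). *)
Definition enc_t (l m : nat) := {ffun 'I_m -> 'I_l}.
Definition transcript (n m l : nat) := {ffun 'I_n * 'I_m -> 'I_l}.

Definition is_distr (R : realFieldType) (T : finType) (D : T -> R) :=
  (forall t, 0 <= D t) /\ \sum_t D t = 1.

Definition is_encoder (R : realFieldType) (F : finFieldType) (l m : nat)
  (Enc : F -> enc_t l m -> R) := forall a, is_distr (Enc a).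

Definition concat_enc (n m l : nat) (e : {ffun 'I_n -> enc_t l m}) :
  transcript n m l := [ffun p : 'I_n * 'I_m => e p.1 p.2].

Definition permute (n m l : nat) (pi : {perm 'I_n * 'I_m})
  (w : transcript n m l) : transcript n m l := [ffun k => w (pi k)].

Definition is_aggregation_protocol (R : realFieldType) (F : finFieldType)
  (n m l : nat) (Enc : F -> enc_t l m -> R) (A : transcript n m l -> F) :=
  is_encoder Enc /\
  forall (x : {ffun 'I_n -> F}) (e : {ffun 'I_n -> enc_t l m}),
    (forall i, 0 < Enc (x i) (e i)) ->
    forall pi : {perm 'I_n * 'I_m}, A (permute pi (concat_enc e)) = \sum_i x i.

(* The shuffled distribution S^Enc_x: independent encodings followed by a
   uniformly random permutation of the n*m coordinates. *)
Definition shuffled (R : realFieldType) (F : finFieldType) (n m l : nat)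
  (Enc : F -> enc_t l m -> R) (x : {ffun 'I_n -> F}) (y : transcript n m l) : R :=
  \sum_(e : {ffun 'I_n -> enc_t l m}) \sum_(pi : {perm 'I_n * 'I_m})
     (\prod_i Enc (x i) (e i)) / #|{perm 'I_n * 'I_m}|%:R
       * (permute pi (concat_enc e) == y)%:R.

Definition SD (R : realFieldType) (T : finType) (P Q : T -> R) : R :=
  2^-1 * \sum_t `|P t - Q t|.

Definition in_B (F : finFieldType) (n : nat) (s : F) (x : {ffun 'I_n -> F}) :=
  \sum_i x i = s.

From HB Require Import structures.
From mathcomp Require Import all_boot all_order all_algebra all_fingroup all_field.
From mathcomp Require Import ring lra.
Set Implicit Arguments. Unset Strict Implicit.
Import Order.TTheory GRing.Theory Num.Theory.
Local Open Scope ring_scope.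

(* A transcript y, together with the map telling which party sent each
   coordinate, determines the input: otherwise party i's messages could be
   exchanged between two valid realizations, changing the sum but not the
   transcript.  Hence at most n^(nm) inputs can produce a given y.  Fixing
   x0 in B_s, the masses S_x0(supp S_x') therefore sum to at most n^(nm)
   over x' in B_s, and since |B_s| = q^(n-1) some x' has
   S_x0(supp S_x') <= n^(nm)/q^(n-1); then SD(S_x0, S_x') >= 1 - that. *)

Section Distributions.

Variables (R : realFieldType) (T : finType).

Lemma SD_ge_1_sub_mass_supp (P Q : T -> R) :
  is_distr P -> is_distr Q -> 1 - \sum_t P t * (Q t != 0)%:R <= SD P Q.
Proof.
move=> [P0 P1] [Q0 Q1]; rewrite /SD.
have le_dist : \sum_t (P t + Q t - 2 * (P t * (Q t != 0)%:R))
               <= \sum_t `|P t - Q t|.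
  apply: ler_sum => t _; have := P0 t; have := Q0 t; case: eqP => [->|_] Qt Pt.
    by rewrite mulr0 subr0 ger0_norm; lra.
  by rewrite mulr1 distrC; apply: le_trans (ler_norm _); lra.
move: le_dist; rewrite sumrB big_split /= P1 Q1 -mulr_sumr => le_dist.
have -> : 1 - \sum_t P t * (Q t != 0)%:R
          = 2^-1 * (1 + 1 - 2 * \sum_t P t * (Q t != 0)%:R) by field.
by apply: ler_wpM2l => //; rewrite invr_ge0 ler0n.
Qed.

Lemma sum_mass_supp_le (I : finType) (P : T -> R) (Q : I -> T -> R) (N : nat) :
  is_distr P -> (forall t, #|[set i | Q i t != 0%R]| <= N)%N ->
  \sum_i \sum_t P t * (Q i t != 0)%:R <= N%:R.
Proof.
move=> [P0 P1] cardN; rewrite exchange_big /=.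
apply: (@le_trans _ _ (\sum_t P t * N%:R)); last by rewrite -mulr_suml P1 mul1r.
apply: ler_sum => t _; rewrite -mulr_sumr ler_wpM2l //.
apply: le_trans (_ : #|[set i | Q i t != 0]|%:R <= N%:R); last by rewrite ler_nat.
rewrite -sum1dep_card natr_sum [leRHS]big_mkcond.
by apply: ler_sum => i _; case: (Q i t != 0).
Qed.

Lemma exists_le_average (A : {set T}) (c : T -> R) (N : R) (k : nat) :
  (0 < k)%N -> (k <= #|A|)%N -> 0 <= N -> \sum_(t in A) c t <= N ->
  exists2 t, t \in A & c t <= N / k%:R.
Proof.
move=> k_gt0 kA N_ge0 sumN.
have [/existsP [t /andP [At ct]] | /existsPn all_gt] :=
  boolP [exists t in A, c t <= N / k%:R]; first by exists t.
have [t0 At0] : exists t0, t0 \in A by apply/card_gt0P; apply: leq_trans kA.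
have lt_sum : \sum_(t in A) (N / k%:R) < \sum_(t in A) c t.
  apply: ltr_sum; first by apply/hasP; exists t0; rewrite ?mem_index_enum.
  by move=> t At; have := all_gt t; rewrite At /= -ltNge.
have k_pos : 0 < k%:R :> R by rewrite ltr0n.
suff : N <= \sum_(t in A) (N / k%:R) by move/le_lt_trans/(_ lt_sum); rewrite ltNge sumN.
rewrite sumr_const -[_ *+ #|A|]mulr_natr.
apply: le_trans (_ : N / k%:R * k%:R <= _); first by rewrite divfK ?gt_eqF.
by apply: ler_wpM2l; rewrite ?divr_ge0 ?ler0n ?ler_nat.
Qed.

End Distributions.

Lemma card_sum_eq_ge (F : finFieldType) (n : nat) (s : F) : (1 <= n)%N ->
  (#|F| ^ n.-1 <= #|[set x : {ffun 'I_n -> F} | (\sum_i x i)%R == s]|)%N.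
Proof.
case: n => // n _ /=.
pose complete (f : {ffun 'I_n -> F}) : {ffun 'I_n.+1 -> F} :=
  [ffun i => if unlift ord_max i is Some j then f j else s - \sum_j f j].
have complete_inj : injective complete.
  move=> f1 f2 /(congr1 (fun g : {ffun 'I_n.+1 -> F} => g (lift ord_max _))) eq12.
  by apply/ffunP => j; have := eq12 j; rewrite !ffunE liftK.
have -> : (#|F| ^ n = #|complete @: [set: {ffun 'I_n -> F}]|)%N.
  by rewrite card_imset // cardsT card_ffun card_ord.
apply: subset_leq_card; apply/subsetP => _ /imsetP [f _ ->].
rewrite inE (bigD1_ord ord_max) //= !ffunE unlift_none.
rewrite [X in _ + X](eq_bigr (fun j => f j)) ?subrK //.
by move=> j _; rewrite ffunE liftK.
Qed.

Section Protocol.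

Variables (R : realFieldType) (F : finFieldType) (n m l : nat).
Variables (Enc : F -> enc_t l m -> R) (A : transcript n m l -> F).

Definition valid_encoding (x : {ffun 'I_n -> F}) (e : {ffun 'I_n -> enc_t l m}) :=
  forall i, 0 < Enc (x i) (e i).

Hypothesis protocol : is_aggregation_protocol Enc A.

Lemma input_eq_of_same_senders (x1 x2 : {ffun 'I_n -> F})
    (e1 e2 : {ffun 'I_n -> enc_t l m}) (pi1 pi2 : {perm 'I_n * 'I_m}) :
  valid_encoding x1 e1 -> valid_encoding x2 e2 ->
  permute pi1 (concat_enc e1) = permute pi2 (concat_enc e2) ->
  (forall k, (pi1 k).1 = (pi2 k).1) -> x1 = x2.
Proof.
have [_ correct] := protocol.
move=> valid1 valid2 same_y same_senders; apply/ffunP => i.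
pose f k := if (pi1 k).1 == i then pi2 k else pi1 k.
have f_inj : injective f.
  move=> k1 k2; rewrite /f.
  case: ifP => /eqP h1; case: ifP => /eqP h2 E.
  - exact: (perm_inj E).
  - by case: h2; rewrite -E -same_senders.
  - by case: h1; rewrite E -same_senders.
  - exact: (perm_inj E).
pose e3 : {ffun 'I_n -> enc_t l m} := [ffun j => if j == i then e2 j else e1 j].
pose x3 : {ffun 'I_n -> F} := [ffun j => if j == i then x2 j else x1 j].
have valid3 : valid_encoding x3 e3 by move=> j; rewrite !ffunE; case: (j == i).
have same_y3 : permute (perm f_inj) (concat_enc e3) = permute pi1 (concat_enc e1).
  apply/ffunP => k; rewrite ffunE permE /f [RHS]ffunE.
  have [sender_i|] := eqVneq (pi1 k).1 i; last by rewrite !ffunE => /negPf ->.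
  have := congr1 (fun w : transcript n m l => w k) same_y; rewrite !ffunE => ->.
  by rewrite -same_senders sender_i eqxx.
have := correct x3 e3 valid3 (perm f_inj).
rewrite same_y3 (correct x1 e1 valid1) (bigD1 i) //= [in RHS](bigD1 i) //= ffunE eqxx.
rewrite [X in _ = _ + X](eq_bigr x1); first exact: addIr.
by move=> j /negPf j_neq_i; rewrite ffunE j_neq_i.
Qed.

Lemma shuffled_distr (x : {ffun 'I_n -> F}) : is_distr (shuffled Enc x).
Proof.
have [enc _] := protocol.
have card_perm_neq0 : #|{perm 'I_n * 'I_m}|%:R != 0 :> R.
  by rewrite pnatr_eq0 -lt0n; apply/card_gt0P; exists 1%g.
split=> [y|].
  apply: sumr_ge0 => e _; apply: sumr_ge0 => pi _.
  rewrite mulr_ge0 ?ler0n // mulr_ge0 ?invr_ge0 ?ler0n //.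
  by apply: prodr_ge0 => i _; case: (enc (x i)).
rewrite /shuffled exchange_big /=.
transitivity (\sum_(e : {ffun 'I_n -> enc_t l m}) \prod_i Enc (x i) (e i)).
  apply: eq_bigr => e _; rewrite exchange_big /=.
  rewrite (eq_bigr (fun=> \prod_i Enc (x i) (e i) / #|{perm 'I_n * 'I_m}|%:R)).
    by rewrite sumr_const -[_ *+ _]mulr_natr divfK.
  move=> pi _; rewrite -mulr_sumr (bigD1 (permute pi (concat_enc e))) //= eqxx.
  rewrite [X in 1 + X]big1 ?addr0 ?mulr1 //.
  by move=> y /negPf; rewrite eq_sym => ->.
rewrite -(bigA_distr_bigA (fun i t => Enc (x i) t)) /=.
by apply: big1 => i _; case: (enc (x i)).
Qed.

Definition realizes (x : {ffun 'I_n -> F}) (y : transcript n m l)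
    (p : {ffun 'I_n -> enc_t l m} * {perm 'I_n * 'I_m}) :=
  [forall i, 0 < Enc (x i) (p.1 i)] && (permute p.2 (concat_enc p.1) == y).

Lemma shuffled_neq0_realizable (x : {ffun 'I_n -> F}) (y : transcript n m l) :
  shuffled Enc x y != 0 -> exists p, realizes x y p.
Proof.
have [enc _] := protocol.
move=> nz; case: (pickP (realizes x y)) => [p real_p | none]; first by exists p.
case/eqP: nz; apply: big1 => e _; apply: big1 => pi _.
have [eq_y|] := eqVneq (permute pi (concat_enc e)) y; last by rewrite mulr0.
have := none (e, pi); rewrite /realizes /= eq_y eqxx andbT => /negbT/forallPn [i].
rewrite -leNgt => Ei_le0.
have Ei : Enc (x i) (e i) = 0 by apply/le_anti; rewrite Ei_le0 (enc (x i)).1.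
by rewrite (bigD1 i) //= Ei !mul0r.
Qed.

Lemma card_input_supp (y : transcript n m l) :
  (#|[set x : {ffun 'I_n -> F} | shuffled Enc x y != 0%R]| <= n ^ (n * m))%N.
Proof.
pose senders x : {ffun 'I_n * 'I_m -> 'I_n} :=
  if [pick p | realizes x y p] is Some p then [ffun k => (p.2 k).1]
  else [ffun k => k.1].
rewrite -(card_in_imset (f := senders)).
  by apply: leq_trans (max_card _) _; rewrite card_ffun card_prod !card_ord.
move=> x1 x2; rewrite !inE.
move=> /shuffled_neq0_realizable [p1 r1] /shuffled_neq0_realizable [p2 r2].
rewrite /senders; case: pickP => [q1 /andP [/forallP v1 /eqP y1] | /(_ p1)];
  last by rewrite r1.
case: pickP => [q2 /andP [/forallP v2 /eqP y2] | /(_ p2)]; last by rewrite r2.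
move=> /ffunP same_senders.
apply: (input_eq_of_same_senders v1 v2 (pi1 := q1.2) (pi2 := q2.2)).
  by rewrite y1 y2.
by move=> k; have := same_senders k; rewrite !ffunE.
Qed.

End Protocol.

Theorem mainTheorem14 (R : realFieldType) (F : finFieldType) (n m l : nat)
  (Enc : F -> enc_t l m -> R) (A : transcript n m l -> F) :
  (1 <= n)%N -> (0 < l)%N ->
  is_aggregation_protocol Enc A ->
  forall s : F, exists x x' : {ffun 'I_n -> F},
    [/\ in_B s x, in_B s x' &
     1 - (n ^ (n * m))%:R / (#|F| ^ n.-1)%:R
       <= SD (shuffled Enc x) (shuffled Enc x')].
Proof.
move=> n_ge1 _ protocol s.
set B := [set x : {ffun 'I_n -> F} | \sum_i x i == s].
have card_B := card_sum_eq_ge s n_ge1.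
have q_pos : (0 < #|F| ^ n.-1)%N.
  by rewrite expn_gt0; apply/orP; left; apply/card_gt0P; exists 0.
have [x0 Bx0] : exists x0, x0 \in B by apply/card_gt0P; apply: leq_trans card_B.
pose overlap x' := \sum_y shuffled Enc x0 y * (shuffled Enc x' y != 0)%:R.
have sum_overlap : \sum_(x' in B) overlap x' <= (n ^ (n * m))%:R.
  apply: le_trans (sum_mass_supp_le (Q := shuffled Enc)
                     (shuffled_distr protocol x0) (card_input_supp protocol)).
  rewrite [leRHS](bigID [in B]) /= lerDl.
  apply: sumr_ge0 => x' _; apply: sumr_ge0 => y _.
  by rewrite mulr_ge0 ?ler0n ?((shuffled_distr protocol x0).1).
have [x' Bx' small_overlap] :=
  exists_le_average q_pos card_B (ler0n _ _) sum_overlap.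
exists x0, x'; split.
- by move: Bx0; rewrite inE => /eqP.
- by move: Bx'; rewrite inE => /eqP.
apply: le_trans (SD_ge_1_sub_mass_supp (shuffled_distr protocol x0)
                                       (shuffled_distr protocol x')).
by rewrite lerD2l lerN2.
Qed.
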